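(* In the setting of the context, for every integer $m\ge 0$ there is a constant $C_m$ (depending on $m$ and on $p$, but not on $N$) such that for all $N\ge 1$, \[ |M_{2m+1}(N)| \;\le\; \frac{C_m}{\sqrt N}. \] In particular $\lim_{N\to\infty} M_{2m+1}(N)=0$.
   Context: Let $p$ be a probability density on $\mathbb{R}$ with mean $0$, variance $1$ and finite moments of all orders. For $N\ge 1$, let $b_1,\dots,b_{N-1}$ be independent random variables with density $p$, set $b_0=0$, and let $A=A_N$ be the $N\times N$ real symmetric Toeplitz matrix with entries $a_{ij}=b_{|i-j|}$ ($1\le i,j\le N$). Let $\lambda_1(A),\dots,\lambda_N(A)$ be its eigenvalues. For an integer $k\ge 0$ define $M_k(A,N)=N^{-(k/2+1)}\sum_{i=1}^N\lambda_i(A)^k = N^{-(k/2+1)}\,\mathrm{Trace}(A^k)$, and $M_k(N)=\mathbb{E}[M_k(A,N)]$, the expectation over the random entries. *)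

From HB Require Import structures.
From mathcomp Require Import all_boot all_order all_algebra.
From mathcomp Require Import all_classical all_reals all_analysis.
Set Implicit Arguments. Unset Strict Implicit. Unset Printing Implicit Defensive.
Import Order.TTheory GRing.Theory Num.Theory.
Local Open Scope classical_set_scope.
Local Open Scope ring_scope.

Section Toeplitz.
Variable R : realType.

Definition leb := (@lebesgue_measure R).

Definition is_good_density (p : R -> R) : Prop :=
  [/\ measurable_fun setT p,
      (forall x, 0 <= p x),
      (forall k : nat, leb.-integrable setT (fun x => ((x ^+ k) * p x)%:E)) &
    [/\ Rintegral leb setT p = 1,
      Rintegral leb setT (fun x => x * p x) = 0 &
      Rintegral leb setT (fun x => x ^+ 2 * p x) = 1]].

(* Expectation of f(b_1,...,b_n) when b_1,...,b_n are i.i.d. with density p: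
   the iterated integral  int f(x_1,..,x_n) p(x_1)...p(x_n) dx_n ... dx_1. *)
Fixpoint iid_expect (p : R -> R) (n : nat) (f : seq R -> R) : R :=
  match n with
  | 0 => f [::]
  | n'.+1 => Rintegral leb setT
               (fun x => p x * iid_expect p n' (fun s => f (x :: s)))
  end.

(* b_d for d >= 1 is the (d-1)-th entry of s; b_0 = 0. *)
Definition bcoef (s : seq R) (d : nat) : R :=
  if d is d'.+1 then nth 0 s d' else 0.

Definition toeplitz (N : nat) (s : seq R) : 'M[R]_N :=
  \matrix_(i < N, j < N) bcoef s `|(i : nat) - (j : nat)|.

Definition Mk_AN (k N : nat) (s : seq R) : R :=
  (N%:R) `^ (- (k%:R / 2 + 1)) * \tr ((toeplitz N s) ^+ k).

Definition Mk (p : R -> R) (k N : nat) : R :=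
  iid_expect p N.-1 (Mk_AN k N).

End Toeplitz.

(* Expanding Tr(A^k) over closed walks i_0 -> i_1 -> ... -> i_k = i_0 in {0,..,N-1} writes
   M_k(A,N) as N^-(k/2+1) times a sum of products of the entries b_|i_t - i_(t+1)|.  As the b_d
   are independent, the expectation of such a product is a product of moments of p; it vanishes
   as soon as some step has length 0 (b_0 = 0) or some length occurs exactly once (p has mean 0).
   For k = 2m+1 a surviving walk thus uses at most m distinct lengths, so it is determined by its
   start, the directions of its steps, the list of its lengths and the assignment of steps to
   lengths: there are at most N 2^k N^m m^k of them.  Each contributes at most B^k, where B
   bounds the first k moments, and N^(m+1) N^-(m+3/2) = N^-1/2. *)

From HB Require Import structures.
From mathcomp Require Import all_boot all_order all_algebra.
From mathcomp Require Import all_classical all_reals all_analysis.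
From mathcomp Require Import ring lra zify.
Import Order.TTheory GRing.Theory Num.Theory numFieldNormedType.Exports.
Set Implicit Arguments. Unset Strict Implicit. Unset Printing Implicit Defensive.

Fixpoint words (X : Type) (xs : seq X) (n : nat) : seq (seq X) :=
  if n is n'.+1 then [seq x :: w | x <- xs, w <- words xs n'] else [:: [::]].

Lemma size_words (X : Type) (xs : seq X) n : size (words xs n) = size xs ^ n.
Proof. by elim: n => [|n IH] //=; rewrite size_allpairs IH expnS. Qed.

Lemma mem_words (X : eqType) (xs : seq X) n w :
  (w \in words xs n) = (size w == n) && all (fun x => x \in xs) w.
Proof.
elim: n w => [|n IH] [|x w] //=; rewrite ?inE //.
  by apply/negbTE/allpairsP => -[[y v] [_ _]].
rewrite eqSS; apply/allpairsP/and3P => [[[y v] /= [hy hv [-> ->]]]|[hw hx hall]].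
  by move: hv; rewrite IH => /andP[-> ->]; rewrite hy.
by exists (x, w); rewrite /= IH hw hall.
Qed.

Lemma uniq_words (X : eqType) (xs : seq X) n : uniq xs -> uniq (words xs n).
Proof.
move=> uxs; elim: n => [|n IH] //=.
by apply: allpairs_uniq => // -[x w] [y v] _ _ [-> ->].
Qed.

Lemma double_size_undup (T : eqType) (s : seq T) :
  {in s, forall x, 1 < count_mem x s} -> 2 * size (undup s) <= size s.
Proof.
move=> hs.
have -> : size s = \sum_(x <- undup s) count_mem x s.
  rewrite -sum1_size -big_undup_iterop_count; apply: eq_bigr => x _.
  by rewrite Monoid.iteropE iter_addn mul1n addn0.
have -> : 2 * size (undup s) = \sum_(x <- undup s) 2.
  by rewrite big_const_seq count_predT iter_addn addn0 mulnC.
rewrite !big_seq.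
by apply: leq_sum => x; rewrite mem_undup; apply: hs.
Qed.

Lemma sum_ord_count_mem n (js : seq nat) :
  \sum_(i < n) count_mem (i : nat) js = count (fun j => j < n) js.
Proof.
elim: js => [|j js IH] /=; first by rewrite big1.
rewrite big_split /= IH; congr (_ + _); case: ltnP => hj.
  rewrite (bigD1 (Ordinal hj)) //= eqxx big1 // => i /eqP hi.
  by apply/eqP; rewrite eqb0; apply/eqP => eji; apply: hi; apply: val_inj.
by rewrite big1 // => i _; apply/eqP; rewrite eqb0 neq_ltn (leq_trans (ltn_ord i) hj) orbT.
Qed.


Lemma count_mem_predn (ds : seq nat) d : all (fun d => 0 < d)%N ds -> (0 < d)%N ->
  count_mem d.-1 (map predn ds) = count_mem d ds.
Proof.
move=> /allP hds hd; rewrite count_map; apply: eq_in_count => x /hds hx /=.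
by rewrite -eqSS !prednK.
Qed.

Definition dist (a b : nat) : nat := `|a - b|.

Definition step_to (a b : nat) : bool * nat := (a <= b, dist a b).

Definition move_by (x : nat) (st : bool * nat) : nat :=
  if st.1 then x + st.2 else x - st.2.

Fixpoint walk (x : nat) (sts : seq (bool * nat)) : seq nat :=
  if sts is st :: r then x :: walk (move_by x st) r else [:: x].

Lemma walk_step_to x r : walk x (pairmap step_to x r) = x :: r.
Proof.
elim: r x => [|y r IH] x //=; rewrite -[in RHS]IH; congr (_ :: walk _ _).
by rewrite /move_by /step_to /dist /=; case: leqP => h; [rewrite distnEr | rewrite distnEl]; lia.
Qed.

Definition close_walk (u : seq nat) : seq nat :=
  if u is x :: r then x :: rcons r x else [::].

Definition step_lengths (u : seq nat) : seq nat :=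
  if u is x :: r then pairmap dist x (rcons r x) else [::].

Lemma close_walk_inj : injective close_walk.
Proof. by move=> [|x r] [|y v] //= [<- /rcons_inj[->]]. Qed.

Lemma size_step_lengths u : size (step_lengths u) = size u.
Proof. by case: u => [|x r] //=; rewrite size_pairmap size_rcons. Qed.

Lemma step_lengths_lt N u : all (fun a => a < N) u -> all (fun d => d < N) (step_lengths u).
Proof.
case: u => [//|x r] /= /andP[hx hr].
have : all (fun a => a < N) (rcons r x) by rewrite all_rcons hx hr.
move: (rcons r x) => t; elim: t x hx {hr} => [|y t IH] z hz //= /andP[hy ht].
rewrite IH // andbT /dist.
by case: (leqP z y) => h; [rewrite distnEr | rewrite distnEl]; lia.
Qed.

(* The code (a, dirs, lens, slots) stands for the walk from a whose i-th step goes in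
   direction dirs_i by the length stored at position slots_i of lens. *)
Definition walk_codes (N m k : nat) : seq (nat * seq bool * seq nat * seq nat) :=
  [seq (c, slots) | c <- [seq (c, lens) | c <- [seq (a, dirs) | a <- iota 0 N,
                                                     dirs <- words [:: true; false] k],
                                           lens <- words (iota 0 N) m],
                    slots <- words (iota 0 m) k].

Definition decode_walk (c : nat * seq bool * seq nat * seq nat) : seq nat :=
  let: (a, dirs, lens, slots) := c in walk a (zip dirs [seq nth 0 lens i | i <- slots]).

Lemma size_walk_codes N m k : size (walk_codes N m k) = N * 2 ^ k * N ^ m * m ^ k.
Proof. by rewrite !size_allpairs !size_words !size_iota. Qed.

Lemma unzip2_pairmap_step_to x t : unzip2 (pairmap step_to x t) = pairmap dist x t.
Proof. by elim: t x => [|y t IH] x //=; rewrite IH. Qed.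

Lemma close_walk_mem_codes N m x r :
  all (fun a => a < N) (x :: r) -> size r < (2 * m).+1 ->
  {in step_lengths (x :: r), forall d, 1 < count_mem d (step_lengths (x :: r))} ->
  close_walk (x :: r) \in map decode_walk (walk_codes N m (size r).+1).
Proof.
move=> hlt hsize hrep; set ds := step_lengths (x :: r) in hrep.
have hsds : size ds = (size r).+1 by rewrite size_step_lengths.
set D := undup ds.
(* Every length is repeated among the at most 2m+1 steps, so at most m distinct lengths occur. *)
have hD : size D <= m by have := double_size_undup hrep; rewrite -/D hsds; lia.
set sts := pairmap step_to x (rcons r x).
set lens := D ++ nseq (m - size D) 0.
set slots := [seq index d D | d <- ds].
have lens_slots : [seq nth 0 lens i | i <- slots] = ds.
  rewrite -map_comp -[RHS]map_id; apply/eq_in_map => d hd /=.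
  have hdD : d \in D by rewrite mem_undup.
  by rewrite nth_cat index_mem hdD nth_index.
apply/mapP; exists (x, unzip1 sts, lens, slots); last first.
  by rewrite /= lens_slots /ds /= -unzip2_pairmap_step_to zip_unzip walk_step_to.
have hxN : x < N by case/andP: hlt.
apply: allpairs_f; first apply: allpairs_f; first apply: allpairs_f.
- by rewrite mem_iota.
- by rewrite mem_words size_map size_pairmap size_rcons eqxx; apply/allP => -[].
- rewrite mem_words size_cat size_nseq subnKC // eqxx all_cat /=.
  apply/andP; split; apply/allP => y.
    rewrite mem_undup => hy; rewrite mem_iota /=.
    by move/allP: (step_lengths_lt hlt) => /(_ y hy).
  by move/nseqP => [-> _]; rewrite mem_iota; lia.
- rewrite mem_words size_map hsds eqxx; apply/allP => y /mapP[d hd ->].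
  by rewrite mem_iota /= (leq_trans _ hD) // index_mem mem_undup.
Qed.

Local Open Scope classical_set_scope.
Local Open Scope ring_scope.

Section WalkExpansion.
Variables (R : pzRingType) (N : nat).
Implicit Type A : 'M[R]_N.

Fixpoint walk_weight A (i : 'I_N) (l : seq 'I_N) (j : 'I_N) : R :=
  if l is x :: l' then A i x * walk_weight A x l' j else A i j.

Definition closed_walk_weight A (w : seq 'I_N) : R :=
  if w is x :: l then walk_weight A x l x else 1.

Lemma exprS_coef_walks A K i j :
  (A ^+ K.+1) i j = \sum_(l <- words (enum 'I_N) K) walk_weight A i l j.
Proof.
elim: K i j => [|K IH] i j; first by rewrite expr1 /= big_seq1.
rewrite exprS -mulmxE mxE /= big_allpairs_dep /= big_enum /=.
by apply: eq_bigr => x _; rewrite IH big_distrr.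
Qed.

Lemma mxtrace_expS_walks A K :
  \tr (A ^+ K.+1) = \sum_(w <- words (enum 'I_N) K.+1) closed_walk_weight A w.
Proof.
rewrite /mxtrace /= big_allpairs_dep /= big_enum /=.
by apply: eq_bigr => i _; rewrite exprS_coef_walks.
Qed.

End WalkExpansion.

Lemma Rintegral_sum (R : realType) d (T : measurableType d) (mu : {measure set T -> \bar R})
    (D : set T) (I : Type) (l : seq I) (f : I -> T -> R) :
  measurable D -> (forall i, mu.-integrable D (EFin \o f i)) ->
  Rintegral mu D (fun x => \sum_(i <- l) f i x) = \sum_(i <- l) Rintegral mu D (f i).
Proof.
move=> mD hf; elim: l => [|i l IH].
  by rewrite big_nil; under eq_Rintegral do rewrite big_nil; rewrite Rintegral_cst // mul0r.
rewrite big_cons -IH; under eq_Rintegral do rewrite big_cons.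
rewrite RintegralD //.
apply: eq_integrable (integrable_sum mD l (P := xpredT) (fun i _ => hf i)) => // x _.
by rewrite /= sumEFin.
Qed.

Section Moments.
Variables (R : realType) (p : R -> R).
Hypothesis p_moments : forall k, (@leb R).-integrable setT (fun x => (x ^+ k * p x)%:E).

Definition moment (k : nat) : R := Rintegral (@leb R) setT (fun x => x ^+ k * p x).

(* Indices beyond the sample read the default 0: as [iid_expect p n] feeds samples of size n,
   [monomial_expect n] carries the factor [all (j < n) js]. *)
Definition monomial (js : seq nat) (s : seq R) : R := \prod_(j <- js) nth 0 s j.

Definition monomial_expect (n : nat) (js : seq nat) : R :=
  (\prod_(i < n) moment (count_mem (i : nat) js)) * (all (fun j => j < n)%N js)%:R.

Definition shift_indices (js : seq nat) : seq nat := [seq j.-1 | j <- js & j != 0%N].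

Lemma monomial_cons js x s :
  monomial js (x :: s) = x ^+ count_mem 0%N js * monomial (shift_indices js) s.
Proof.
rewrite /monomial /shift_indices; elim: js => [|j js IH]; first by rewrite !big_nil mulr1.
rewrite /= big_cons IH; case: j => [|j] /=; first by rewrite exprS mulrA.
by rewrite big_cons add0n mulrCA.
Qed.

Lemma count_mem_shift_indices i js : count_mem i (shift_indices js) = count_mem i.+1 js.
Proof. by elim: js => [|[|j] js IH] //=; rewrite -IH. Qed.

Lemma all_shift_indices n js :
  all (fun j => j < n)%N (shift_indices js) = all (fun j => j < n.+1)%N js.
Proof. by elim: js => [|[|j] js IH] //=; rewrite -IH. Qed.

Lemma monomial_expect_cons n js :
  monomial_expect n.+1 js = moment (count_mem 0%N js) * monomial_expect n (shift_indices js).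
Proof.
rewrite /monomial_expect big_ord_recl /= all_shift_indices mulrA; congr (_ * _ * _).
by apply: eq_bigr => i _; rewrite count_mem_shift_indices.
Qed.

Lemma integrable_scaled_moment (c : R) k :
  (@leb R).-integrable setT (EFin \o (fun x => c * (x ^+ k * p x))).
Proof.
by apply: eq_integrable (integrableZl _ c (p_moments k)).
Qed.

Lemma iid_expect_monomials n (I : Type) (l : seq I) (c : I -> R) (J : I -> seq nat) :
  iid_expect p n (fun s => \sum_(i <- l) c i * monomial (J i) s) =
  \sum_(i <- l) c i * monomial_expect n (J i).
Proof.
elim: n c J => [|n IH] c J /=.
  apply: eq_bigr => i _; congr (_ * _); rewrite /monomial /monomial_expect big_ord0 mul1r.
  by case: (J i) => [|j js] /=; rewrite ?big_nil // big_cons nth_nil mul0r.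
transitivity (Rintegral (@leb R) setT (fun x => \sum_(i <- l)
   (c i * monomial_expect n (shift_indices (J i))) * (x ^+ count_mem 0%N (J i) * p x))).
  apply: eq_Rintegral => x _.
  under eq_fun => s do under eq_bigr => i _ do rewrite monomial_cons mulrA.
  rewrite (IH (fun i => c i * x ^+ count_mem 0%N (J i)) (fun i => shift_indices (J i))).
  by rewrite big_distrr /=; apply: eq_bigr => i _; ring.
rewrite Rintegral_sum //; last by move=> i; apply: integrable_scaled_moment.
apply: eq_bigr => i _; rewrite RintegralZl //; first by rewrite monomial_expect_cons /moment; ring.
by apply: eq_integrable (integrable_scaled_moment 1 _) => // x _ /=; rewrite mul1r.
Qed.

End Moments.

Section ToeplitzWalks.
Variable R : realType.

Lemma prod_bcoef (s : seq R) ds :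
  \prod_(d <- ds) bcoef s d = (all (fun d => 0 < d)%N ds)%:R * monomial (map predn ds) s.
Proof.
rewrite /monomial; elim: ds => [|[|d] ds IH] /=; first by rewrite !big_nil mulr1.
  by rewrite big_cons /= !mul0r.
by rewrite !big_cons IH /=; ring.
Qed.

Lemma walk_weight_toeplitz N (s : seq R) i l j :
  walk_weight (toeplitz N s) i l j =
  \prod_(d <- pairmap dist (val i) (rcons (map val l) (val j))) bcoef s d.
Proof.
elim: l i => [|x l IH] i /=; first by rewrite big_seq1 mxE.
by rewrite big_cons IH mxE.
Qed.

Definition positive_steps N (w : seq 'I_N) : bool :=
  all (fun d => 0 < d)%N (step_lengths (map val w)).

Definition length_indices N (w : seq 'I_N) : seq nat :=
  map predn (step_lengths (map val w)).

Lemma closed_walk_weight_toeplitz N (s : seq R) w :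
  closed_walk_weight (toeplitz N s) w = (positive_steps w)%:R * monomial (length_indices w) s.
Proof.
case: w => [|x l]; first by rewrite /= /monomial big_nil mulr1.
by rewrite /= walk_weight_toeplitz prod_bcoef.
Qed.

Lemma Mk_closed_walks (p : R -> R) K N :
  (forall k, (@leb R).-integrable setT (fun x => (x ^+ k * p x)%:E)) ->
  Mk p K.+1 N = N%:R `^ (- (K.+1%:R / 2 + 1)) *
    \sum_(w <- words (enum 'I_N) K.+1)
       (positive_steps w)%:R * monomial_expect p N.-1 (length_indices w).
Proof.
move=> p_moments; rewrite big_distrr /Mk.
have -> : Mk_AN (R := R) K.+1 N = fun s => \sum_(w <- words (enum 'I_N) K.+1)
    (N%:R `^ (- (K.+1%:R / 2 + 1)) * (positive_steps w)%:R) * monomial (length_indices w) s.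
  apply: funext => s; rewrite /Mk_AN mxtrace_expS_walks big_distrr.
  by apply: eq_bigr => w _; rewrite closed_walk_weight_toeplitz; exact: mulrA.
rewrite iid_expect_monomials //; apply: eq_bigr => w _; exact: esym (mulrA _ _ _).
Qed.

End ToeplitzWalks.

Lemma sumr_natr_count (R : pzSemiRingType) (I : Type) (r : seq I) (P : pred I) :
  \sum_(i <- r) (P i)%:R = (count P r)%:R :> R.
Proof. by elim: r => [|i r IH]; rewrite ?big_nil // big_cons IH natrD. Qed.

Lemma powR_odd_normalisation (R : realType) N m : (0 < N)%N ->
  N%:R `^ (- ((2 * m).+1%:R / 2 + 1)) * N%:R ^+ m.+1 = (Num.sqrt (N%:R : R))^-1.
Proof.
move=> N_gt0; rewrite -powR_mulrn ?ler0n // -powRD; last first.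
  by apply/implyP => _; rewrite pnatr_eq0 -lt0n.
have -> : - ((2 * m).+1%:R / 2 + 1) + m.+1%:R = - (2^-1 : R).
  by rewrite -addn1 natrD natrM -addn1 natrD; field.
by rewrite powRN powR12_sqrt // ler0n.
Qed.

Lemma cvg_inv_sqrt_bound (R : realType) (u : nat -> R) C :
  (forall N, (1 <= N)%N -> `|u N| <= C / Num.sqrt N%:R) -> u @ \oo --> 0.
Proof.
move=> hu; apply/cvgr0Pnorm_lt => eps eps_gt0.
have C_ge0 : 0 <= C.
  by have := hu 1%N isT; rewrite sqrtr1 divr1; apply: le_trans.
exists (Num.trunc ((C / eps) ^+ 2)).+1 => // N /= hN.
have N_gt0 : (0 < N)%N by apply: leq_trans hN.
apply: le_lt_trans (hu N N_gt0) _.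
have sqrtN_gt0 : 0 < Num.sqrt (N%:R : R) by rewrite sqrtr_gt0 ltr0n.
have : (C / eps) ^+ 2 < N%:R.
  by apply: lt_le_trans (truncnS_gt _) _; rewrite ler_nat.
rewrite -ltr_sqrt ?ltr0n // sqrtr_sqr ger0_norm; last first.
  by rewrite divr_ge0 // ltW.
by rewrite ltr_pdivrMr // mulrC -ltr_pdivrMr.
Qed.

Section OddMoments.
Variables (R : realType) (p : R -> R).
Hypothesis hp : is_good_density p.

Lemma good_density_moments k : (@leb R).-integrable setT (fun x => (x ^+ k * p x)%:E).
Proof. by case: hp. Qed.

Lemma moment0 : moment p 0 = 1.
Proof.
case: hp => _ _ _ [<- _ _]; rewrite /moment.
by apply: eq_Rintegral => x _; rewrite expr0 mul1r.
Qed.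

Lemma moment1 : moment p 1 = 0.
Proof.
case: hp => _ _ _ [_ <- _]; rewrite /moment.
by apply: eq_Rintegral => x _; rewrite expr1.
Qed.

Definition moment_scale K : R := 1 + \sum_(c < K.+1) `|moment p c|.

Lemma moment_scale_ge1 K : 1 <= moment_scale K.
Proof. by rewrite lerDl sumr_ge0. Qed.

Lemma moment_le_scale K c : (c <= K)%N -> `|moment p c| <= moment_scale K ^+ c.
Proof.
case: c => [|c] hc; first by rewrite moment0 normr1 expr0.
apply: le_trans (ler_eXnr _ (moment_scale_ge1 K)) => //.
rewrite /moment_scale (bigD1 (Ordinal (hc : (c.+1 < K.+1)%N))) //=.
have : 0 <= \sum_(i < K.+1 | i != Ordinal (hc : (c.+1 < K.+1)%N)) `|moment p i|.
  exact: sumr_ge0.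
lra.
Qed.


Lemma monomial_expect_le n js :
  `|monomial_expect p n js| <= moment_scale (size js) ^+ size js.
Proof.
have all_le1 : `|(all (fun j => j < n)%N js)%:R : R| <= 1 by case: all; rewrite ?normr1 ?normr0.
rewrite /monomial_expect normrM; apply: le_trans (ler_wpM2l (normr_ge0 _) all_le1) _.
rewrite mulr1 normr_prod.
apply: le_trans (_ : \prod_(i < n) moment_scale (size js) ^+ count_mem (i : nat) js <= _).
  by apply: ler_prod => i _; rewrite normr_ge0 moment_le_scale // count_size.
rewrite prodrXr; apply: ler_weXn2l; first exact: moment_scale_ge1.
by rewrite sum_ord_count_mem count_size.
Qed.

Lemma monomial_expect_neq0_repeated n js :
  monomial_expect p n js != 0 -> {in js, forall j, (1 < count_mem j js)%N}.
Proof.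
rewrite /monomial_expect => hE j hj.
case hall : (all (fun j => j < n)%N js); last by move: hE; rewrite hall mulr0 eqxx.
have hjn : (j < n)%N by move/allP: hall; apply.
rewrite ltn_neqAle -has_count has_pred1 hj andbT eq_sym; apply/eqP => hj1.
by move: hE; rewrite (bigD1 (Ordinal hjn)) //= hj1 moment1 !mul0r eqxx.
Qed.

Definition contributing N (w : seq 'I_N) : bool :=
  positive_steps w && (monomial_expect p N.-1 (length_indices w) != 0).

Lemma contributing_lengths_repeated N (w : seq 'I_N) : contributing w ->
  {in step_lengths (map val w), forall d, (1 < count_mem d (step_lengths (map val w)))%N}.
Proof.
case/andP => hpos /monomial_expect_neq0_repeated hrep d hd.
have d_gt0 : (0 < d)%N by move/allP: hpos; apply.
by rewrite -count_mem_predn // hrep // map_f.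
Qed.

Lemma count_contributing N m :
  (count (@contributing N) (words (enum 'I_N) (2 * m).+1)
     <= N * 2 ^ (2 * m).+1 * N ^ m * m ^ (2 * m).+1)%N.
Proof.
rewrite -size_filter -(size_map (close_walk \o map val)) -(size_walk_codes N m).
rewrite -(size_map decode_walk); apply: uniq_leq_size.
  rewrite map_inj_in_uniq ?filter_uniq ?uniq_words ?enum_uniq // => w v _ _ /close_walk_inj.
  exact: (inj_map val_inj).
move=> u /mapP[w]; rewrite mem_filter mem_words => /and3P[hw /eqP size_w _] ->.
case: w size_w hw => [//|x l] /= [size_l] hw.
have := @close_walk_mem_codes N m (val x) (map val l) _ _ (contributing_lengths_repeated hw).
rewrite size_map size_l; apply => //.
by rewrite /= ltn_ord; apply/allP => a /mapP[i _ ->].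
Qed.

Lemma walk_term_le N (w : seq 'I_N) :
  `|(positive_steps w)%:R * monomial_expect p N.-1 (length_indices w)|
    <= moment_scale (size w) ^+ size w * (contributing w)%:R.
Proof.
rewrite /contributing; case: (positive_steps w) => /=; last by rewrite !mul0r normr0 mulr0.
case: eqP => [->|_] /=; first by rewrite mulr0 normr0 mulr0.
have size_len : size (length_indices w) = size w by rewrite size_map size_step_lengths size_map.
by rewrite mul1r mulr1 -size_len monomial_expect_le.
Qed.

Lemma Mk_le_count K N :
  `|Mk p K.+1 N| <= N%:R `^ (- (K.+1%:R / 2 + 1)) *
    (moment_scale K.+1 ^+ K.+1 * (count (@contributing N) (words (enum 'I_N) K.+1))%:R).
Proof.
rewrite Mk_closed_walks; last exact: good_density_moments.
rewrite normrM ger0_norm ?powR_ge0 // -sumr_natr_count big_distrr.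
apply: ler_wpM2l; first exact: powR_ge0.
apply: le_trans (ler_norm_sum _ _ _) _.
rewrite big_seq [X in _ <= X]big_seq; apply: ler_sum => w.
by rewrite mem_words => /andP[/eqP <- _]; apply: walk_term_le.
Qed.

Definition odd_moment_constant m : R :=
  moment_scale (2 * m).+1 ^+ (2 * m).+1 * 2 ^+ (2 * m).+1 * m%:R ^+ (2 * m).+1.

Lemma Mk_odd_le m N : (0 < N)%N ->
  `|Mk p (2 * m).+1 N| <= odd_moment_constant m / Num.sqrt N%:R.
Proof.
move=> N_gt0; apply: le_trans (Mk_le_count _ _) _.
rewrite -(powR_odd_normalisation R m N_gt0) /odd_moment_constant.
set k := (2 * m).+1; set e := _ `^ _; set B := moment_scale k.
have e_ge0 : 0 <= e by apply: powR_ge0.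
have Bk_ge0 : 0 <= B ^+ k by rewrite exprn_ge0 // (le_trans _ (moment_scale_ge1 k)).
have : ((count (@contributing N) (words (enum 'I_N) k))%:R <= (N * 2 ^ k * N ^ m * m ^ k)%:R :> R).
  by rewrite ler_nat count_contributing.
move=> /(ler_wpM2l Bk_ge0) /(ler_wpM2l e_ge0) /le_trans; apply.
by rewrite !natrM !natrX exprS le_eqVlt; apply/orP; left; apply/eqP; ring.
Qed.

End OddMoments.

Theorem mainTheorem2 (R : realType) (p : R -> R) (hp : is_good_density p) :
  forall m : nat,
    (exists C : R, forall N : nat, (1 <= N)%N ->
        `|Mk p (2 * m).+1 N| <= C / Num.sqrt (N%:R))
    /\ (fun N : nat => Mk p (2 * m).+1 N) @ \oo --> (0 : R)%R.
Proof.
move=> m; split; first by exists (odd_moment_constant p m); apply: Mk_odd_le.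
exact: cvg_inv_sqrt_bound (Mk_odd_le hp m).
Qed.
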